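(* Let $n \ge 1$, let $C \subset \mathbb{R}^n$ be compact, let $f : C \to \mathbb{R}$ be continuous, and let $\epsilon > 0$. Then there exist a positive integer $k$, parameters $W_{ij} \in \mathbb{R}^n$, $b_{ij} \in \mathbb{R}$ for $i \in \{1,2\}$, $j \in \{1,\dots,k\}$, and output-layer parameters $u_1, u_2, c \in \mathbb{R}$ such that the maxout network with two maxout hidden units \[ g(v) = u_1 h_1(v) + u_2 h_2(v) + c, \qquad h_i(v) = \max_{j \in \{1,\dots,k\}} \left( v^T W_{ij} + b_{ij} \right), \] satisfies $|f(v) - g(v)| < \epsilon$ for all $v \in C$. That is, any continuous function on a compact domain can be approximated arbitrarily well by a maxout network with two maxout hidden units, provided each maxout unit may have arbitrarily many affine components $k$.
   Context: A maxout hidden unit with $k$ affine components, acting on an input $v \in \mathbb{R}^n$, computes $h(v) = \max_{j \in \{1,\dots,k\}} (v^T W_j + b_j)$ with learned parameters $W_j \in \mathbb{R}^n$, $b_j \in \mathbb{R}$; thus it is a convex piecewise linear function of $v$. A maxout network with two maxout hidden units consists of two such units $h_1, h_2$ (each with the same number $k$ of affine components) applied to the input $v$, followed by a linear (affine) output layer producing the real-valued output $g(v) = u_1 h_1(v) + u_2 h_2(v) + c$. *)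

From HB Require Import structures.
From mathcomp Require Import all_boot all_order all_algebra.
From mathcomp Require Import all_classical all_reals all_analysis.
Set Implicit Arguments. Unset Strict Implicit. Unset Printing Implicit Defensive.
Import Order.TTheory GRing.Theory Num.Theory.
Local Open Scope ring_scope.

Definition affine (R : realType) (n : nat) (w : 'rV[R]_n) (b : R) (v : 'rV[R]_n) : R :=
  (v *m w^T) 0 0 + b.

(* Maxout unit with k.+1 affine components (k.+1 >= 1 components):
   h(v) = max_{j} (v^T W_j + b_j). *)
Definition maxout_unit (R : realType) (n k : nat)
  (W : 'I_k.+1 -> 'rV[R]_n) (b : 'I_k.+1 -> R) (v : 'rV[R]_n) : R :=
  \big[Num.max/affine (W ord0) (b ord0) v]_(j < k.+1) affine (W j) (b j) v.

Definition maxout2 (R : realType) (n k : nat)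
  (W : 'I_2 -> 'I_k.+1 -> 'rV[R]_n) (b : 'I_2 -> 'I_k.+1 -> R)
  (u1 u2 c : R) (v : 'rV[R]_n) : R :=
  u1 * maxout_unit (W 0) (b 0) v + u2 * maxout_unit (W 1) (b 1) v + c.

From HB Require Import structures.
From mathcomp Require Import all_boot all_order all_algebra.
From mathcomp Require Import all_classical all_reals all_analysis.
From mathcomp Require Import finmap lra.
Import Order.TTheory GRing.Theory Num.Theory numFieldNormedType.Exports.
Local Open Scope ring_scope.
Local Open Scope classical_set_scope.

(* Call a function max-affine if it is the pointwise maximum of finitely many
   affine maps; these are exactly the functions computed by one maxout unit
   with enough components, so a two-unit network with output weights 1 and -1
   computes every difference of two max-affine functions.  Such differences
   are closed under maximum, since
   max (h1 - h2) (k1 - k2) = max (h1 + k2) (k1 + h2) - (h2 + k2).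
   By compactness C is covered by finitely many balls B(x, r) centred in C on
   whose doubles f oscillates by less than eps; each tent
   v |-> f x - (2 M / r) max 0 (|v - x| - r), with M a bound of |f| on C, is
   such a difference (the sup-norm is a max of coordinate functionals), equals
   f x on B(x, r) and lies below f v + eps on C.  The maximum of -M and these
   finitely many tents is thus eps-close to f on C. *)

Set Implicit Arguments.
Unset Strict Implicit.
Unset Printing Implicit Defensive.

Section MaxAffine.
Variables (R : realType) (n : nat).
Local Notation V := 'rV[R]_n.

Lemma bigmax_fun_closed (I : eqType) (Q : (V -> R) -> Prop) (r : seq I)
    (h0 : V -> R) (F : I -> V -> R) :
  (forall g1 g2, Q g1 -> Q g2 -> Q (fun v => Num.max (g1 v) (g2 v))) ->
  Q h0 -> (forall i, i \in r -> Q (F i)) ->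
  Q (fun v => \big[Num.max/h0 v]_(i <- r) F i v).
Proof.
move=> Qmax Qh0; elim: r => [_|i r IH QF]; first by under eq_fun do rewrite big_nil.
under eq_fun do rewrite big_cons.
apply: Qmax; first by apply: QF; rewrite mem_head.
by apply: IH => j jr; apply: QF; rewrite inE jr orbT.
Qed.

Definition aff (p : V * R) (v : V) : R := affine p.1 p.2 v.

Lemma aff_add (p q : V * R) v : aff (p.1 + q.1, p.2 + q.2) v = aff p v + aff q v.
Proof. rewrite /aff /affine /= linearD /= mulmxDr mxE; lra. Qed.

Lemma aff_scale a (p : V * R) v : aff (a *: p.1, a * p.2) v = a * aff p v.
Proof. by rewrite /aff /affine /= linearZ /= -scalemxAr mxE mulrDr. Qed.

Lemma aff_cst c v : aff (0, c) v = c.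
Proof. by rewrite /aff /affine /= trmx0 mulmx0 mxE add0r. Qed.

Lemma aff_coord (x : V) (j : 'I_n) v : aff (delta_mx 0 j, - x 0 j) v = (v - x) 0 j.
Proof. by rewrite /aff /affine /= trmx_delta -colE !mxE. Qed.

Definition max_affine (h : V -> R) := exists L : seq (V * R),
  (forall v, exists2 p, p \in L & h v = aff p v) /\
  (forall v p, p \in L -> aff p v <= h v).

Lemma eq_max_affine h1 h2 : h1 =1 h2 -> max_affine h1 -> max_affine h2.
Proof.
move=> e [L [attained le_h]]; exists L.
by split=> [v|v p]; rewrite -e; [exact: attained | exact: le_h].
Qed.

Lemma max_affine_aff p : max_affine (aff p).
Proof.
by exists [:: p]; split=> [v|v q]; [exists p; rewrite ?inE | rewrite inE => /eqP ->].
Qed.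

Lemma max_affine_cst c : max_affine (fun=> c).
Proof. exact: eq_max_affine (aff_cst c) (max_affine_aff _). Qed.

Lemma max_affine_max h1 h2 : max_affine h1 -> max_affine h2 ->
  max_affine (fun v => Num.max (h1 v) (h2 v)).
Proof.
move=> [L1 [A1 B1]] [L2 [A2 B2]]; exists (L1 ++ L2); split => [v|v p].
  have [_|_] := leP (h1 v) (h2 v).
    by have [p pL ->] := A2 v; exists p; rewrite ?mem_cat ?pL ?orbT.
  by have [p pL ->] := A1 v; exists p; rewrite ?mem_cat ?pL.
by rewrite mem_cat le_max => /orP[/B1 -> | /B2 ->]; rewrite ?orbT.
Qed.

Lemma max_affine_add h1 h2 : max_affine h1 -> max_affine h2 ->
  max_affine (fun v => h1 v + h2 v).
Proof.
move=> [L1 [A1 B1]] [L2 [A2 B2]].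
pose sum (p q : V * R) := (p.1 + q.1, p.2 + q.2).
exists [seq sum p q | p <- L1, q <- L2]; split => [v|v r].
  have [p pL ->] := A1 v; have [q qL ->] := A2 v.
  by exists (sum p q); [exact: allpairs_f | rewrite aff_add].
by move=> /allpairsP [[p q] /= [pL qL ->]]; rewrite aff_add lerD ?B1 ?B2.
Qed.

Lemma max_affine_scale a h : 0 <= a -> max_affine h -> max_affine (fun v => a * h v).
Proof.
move=> a0 [L [A B]]; exists [seq (a *: p.1, a * p.2) | p <- L]; split => [v|v r].
  have [p pL ->] := A v; exists (a *: p.1, a * p.2); last by rewrite aff_scale.
  exact: map_f.
by move=> /mapP [p pL ->]; rewrite aff_scale ler_wpM2l ?B.
Qed.

Lemma max_affine_norm (x : V) : max_affine (fun v => `|v - x|).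
Proof.
have coord s (i : 'I_1) j : max_affine (fun v => s * (v - x) i j).
  apply: (@eq_max_affine (aff (s *: delta_mx 0 j, s * - x 0 j))) => [v|].
    by rewrite (aff_scale s (delta_mx 0 j, - x 0 j)) aff_coord (ord1 i).
  exact: max_affine_aff.
apply: (@eq_max_affine (fun v => \big[Num.max/0]_(ij : 'I_1 * 'I_n)
   Num.max (1 * (v - x) ij.1 ij.2) ((-1) * (v - x) ij.1 ij.2))).
  move=> v; rewrite -[RHS]/(mx_norm (v - x)) mx_normrE.
  by apply: eq_bigr => ij _; rewrite mul1r mulN1r maxrN.
apply: bigmax_fun_closed; [exact: max_affine_max | exact: max_affine_cst|].
by move=> ij _; apply: max_affine_max; apply: coord.
Qed.

Lemma max_affine_maxout_unit h : max_affine h ->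
  exists m, forall k, (m <= k)%N ->
  exists (W : 'I_k.+1 -> V) (b : 'I_k.+1 -> R), h =1 maxout_unit W b.
Proof.
move=> [L [A B]]; have [p0 p0L _] := A 0.
exists (size L) => k Lk.
have inL j : nth p0 L j \in L.
  have [jL|jL] := ltnP j (size L); first exact: mem_nth.
  by rewrite nth_default.
exists (fun j => (nth p0 L j).1), (fun j => (nth p0 L j).2) => v.
apply/eqP; rewrite eq_le; apply/andP; split; last first.
  by apply: bigmax_le => [|j _]; apply: B.
have [p pL ->] := A v.
have ip : (index p L < k.+1)%N by rewrite (leq_trans _ (leqW Lk)) // index_mem.
apply: le_trans (le_bigmax _ (fun j : 'I_k.+1 => aff (nth p0 L j) v) (Ordinal ip)).
by rewrite /= nth_index.
Qed.

Definition diff_max_affine (g : V -> R) := exists h1 h2,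
  [/\ max_affine h1, max_affine h2 & forall v, g v = h1 v - h2 v].

Lemma max_affine_diff h : max_affine h -> diff_max_affine h.
Proof.
move=> Hh; exists h, (fun=> 0); split=> [||v]; rewrite ?subr0 //.
exact: max_affine_cst.
Qed.

Lemma diff_max_affine_max g1 g2 : diff_max_affine g1 -> diff_max_affine g2 ->
  diff_max_affine (fun v => Num.max (g1 v) (g2 v)).
Proof.
move=> [h1 [h2 [H1 H2 E]]] [k1 [k2 [K1 K2 F]]].
exists (fun v => Num.max (h1 v + k2 v) (k1 v + h2 v)), (fun v => h2 v + k2 v).
split=> [||v]; [by apply: max_affine_max; apply: max_affine_add|exact: max_affine_add|].
rewrite E F; have [le_g|lt_g] := leP (h1 v - h2 v) (k1 v - k2 v).
  by rewrite max_r; lra.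
by rewrite max_l; lra.
Qed.

Lemma diff_max_affine_maxout2 g : diff_max_affine g ->
  exists k (W : 'I_2 -> 'I_k.+1 -> V) (b : 'I_2 -> 'I_k.+1 -> R) (u1 u2 c : R),
    g =1 maxout2 W b u1 u2 c.
Proof.
move=> [h1 [h2 [H1 H2 E]]].
have [m1 unit1] := max_affine_maxout_unit H1.
have [m2 unit2] := max_affine_maxout_unit H2.
have [W1 [b1 E1]] := unit1 (maxn m1 m2) (leq_maxl _ _).
have [W2 [b2 E2]] := unit2 (maxn m1 m2) (leq_maxr _ _).
exists (maxn m1 m2), (fun i => if i == 0 then W1 else W2),
  (fun i => if i == 0 then b1 else b2), 1, (-1), 0 => v.
by rewrite /maxout2 /= E E1 E2; lra.
Qed.

End MaxAffine.

Section Approximation.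
Variables (R : realType) (n : nat) (C : set 'rV[R]_n) (f : 'rV[R]_n -> R) (eps : R).
Local Notation V := 'rV[R]_n.

Definition small_oscillation (q : V * R) := [/\ C q.1, 0 < q.2 &
  forall y, C y -> `|y - q.1| < 2 * q.2 -> `|f y - f q.1| < eps].

Lemma small_oscillation_cover : compact C -> {within C, continuous f} -> 0 < eps ->
  exists l : seq (V * R), (forall q, q \in l -> small_oscillation q) /\
    forall v, C v -> exists2 q, q \in l & `|v - q.1| < q.2.
Proof.
move=> cC fC eps_gt0.
have cov : C `<=` cover small_oscillation (fun q => ball q.1 q.2).
  move=> x Cx.
  have /(cvgrPdist_lt _ _).1 /(_ _ eps_gt0) := (subspace_continuousP C f).1 fC x Cx.
  rewrite near_withinE => /nbhs_ballP [d /= d0 near_x].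
  exists (x, d / 2); last by rewrite /= -ball_normE /ball_ /= subrr normr0 divr_gt0.
  split=> //=; first by rewrite divr_gt0.
  move=> y Cy; rewrite mulrC divfK ?gt_eqF // => yd.
  by rewrite distrC; apply: near_x; rewrite // -ball_normE /ball_ /= distrC.
move: cC; rewrite compact_cover => /(_ _ small_oscillation (fun q => ball q.1 q.2)).
case=> [q _|//|D Dsmall Dcover]; first exact: ball_open.
exists (enum_fset D); split=> [q /Dsmall|v /Dcover [q qD]]; first by rewrite in_setE.
by rewrite -ball_normE /ball_ /= distrC; exists q.
Qed.

Definition bump (s : R) (q : V * R) (v : V) : R :=
  f q.1 - s * Num.max 0 (`|v - q.1| - q.2).

Lemma diff_max_affine_bump s q : 0 <= s -> diff_max_affine (bump s q).
Proof.
move=> s0; exists (fun=> f q.1), (fun v => s * Num.max 0 (`|v - q.1| + - q.2)).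
split=> [||//]; first exact: max_affine_cst.
apply: max_affine_scale => //; apply: max_affine_max; first exact: max_affine_cst.
by apply: max_affine_add; [exact: max_affine_norm | exact: max_affine_cst].
Qed.

Lemma bump_center s q v : `|v - q.1| <= q.2 -> bump s q v = f q.1.
Proof. by move=> vq; rewrite /bump max_l ?mulr0 ?subr0 // subr_le0. Qed.

Lemma bump_lt (M : R) q v : 0 < eps -> (forall y, C y -> `|f y| <= M) ->
  small_oscillation q -> C v -> bump (2 * M / q.2) q v < f v + eps.
Proof.
move=> eps_gt0 fM [Cq q2_gt0 osc] Cv; rewrite /bump.
have := fM _ Cv; have := fM _ Cq; rewrite !ler_norml => /andP[_ fqM] /andP[fvM _].
have M0 : 0 <= M := le_trans (normr_ge0 _) (fM _ Cv).
have s0 : 0 <= 2 * M / q.2 by rewrite divr_ge0 ?mulr_ge0 // ltW.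
have m0 : 0 <= Num.max 0 (`|v - q.1| - q.2) by rewrite le_max lexx.
have [near|far] := ltP `|v - q.1| (2 * q.2).
  have := osc _ Cv near; rewrite ltr_norml => /andP[lo _].
  by have := mulr_ge0 s0 m0; lra.
(* Outside the double ball the slope [2 M / q.2] pushes the bump below [- M]. *)
have penalty : 2 * M <= 2 * M / q.2 * Num.max 0 (`|v - q.1| - q.2).
  rewrite -[leLHS](divfK (lt0r_neq0 q2_gt0)) ler_wpM2l // le_max; apply/orP; right; lra.
lra.
Qed.

Lemma bump_bigmax_approx (M : R) (l : seq (V * R)) : 0 < eps ->
  (forall y, C y -> `|f y| <= M) -> (forall q, q \in l -> small_oscillation q) ->
  (forall v, C v -> exists2 q, q \in l & `|v - q.1| < q.2) ->
  forall v, C v -> `|f v - \big[Num.max/- M]_(q <- l) bump (2 * M / q.2) q v| < eps.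
Proof.
move=> eps_gt0 fM lsmall lcover v Cv; rewrite distrC ltr_distl; apply/andP; split.
  have [q ql vq] := lcover v Cv; have [_ q2_gt0 osc] := lsmall q ql.
  apply: lt_le_trans (le_bigmax_seq _ _ _ _ ql isT); rewrite bump_center ?ltW //.
  have near : `|v - q.1| < 2 * q.2 by lra.
  by have := osc v Cv near; rewrite ltr_norml => /andP[_ hi]; lra.
rewrite big_seq; apply: bigmax_lt => [|q ql].
  by have := fM _ Cv; rewrite ler_norml => /andP[fvM _]; lra.
exact: bump_lt eps_gt0 fM (lsmall q ql) Cv.
Qed.

End Approximation.

Theorem theorem1 (R : realType) (n : nat) (hn : (1 <= n)%N)
  (C : set 'rV[R]_n) (f : 'rV[R]_n -> R) (eps : R) :
  compact C -> {within C, continuous f} -> 0 < eps ->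
  exists (k : nat) (W : 'I_2 -> 'I_k.+1 -> 'rV[R]_n) (b : 'I_2 -> 'I_k.+1 -> R)
         (u1 u2 c : R),
    forall v, C v -> `|f v - maxout2 W b u1 u2 c v| < eps.
Proof.
move=> cC fC eps_gt0.
have [M M_gt0 fM] : exists2 M : R, 0 < M & forall v, C v -> `|f v| <= M.
  have /compact_bounded/pinfty_ex_gt0 [M M_gt0 fCM] := continuous_compact fC cC.
  by exists M => // v Cv; apply: fCM; exists v.
have [l [lsmall lcover]] := small_oscillation_cover cC fC eps_gt0.
pose g v := \big[Num.max/- M]_(q <- l) bump f (2 * M / q.2) q v.
have g_diff : diff_max_affine g.
  apply: (@bigmax_fun_closed _ _ _ _ l (fun=> - M) (fun q => bump f (2 * M / q.2) q)).
  - exact: diff_max_affine_max.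
  - exact/max_affine_diff/max_affine_cst.
  - move=> q /lsmall [_ q2_gt0 _]; apply: diff_max_affine_bump.
    by rewrite divr_ge0 ?mulr_ge0 // ltW.
have [k [W [b [u1 [u2 [c gE]]]]]] := diff_max_affine_maxout2 g_diff.
exists k, W, b, u1, u2, c => v Cv; rewrite -gE.
exact: bump_bigmax_approx eps_gt0 fM lsmall lcover v Cv.
Qed.
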